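(* Let $H=(\mathbb N,\mathbb N,\mathbb N,p_1,p_2,p_3)$ with $\mathbb N=\{0,1,2,\dots\}$ and $p_1(k,\ell,m)=\ell+1$ if $k=\ell+1$ and $0$ otherwise, $p_2(k,\ell,m)=k$ if $k=\ell$ and $0$ otherwise, $p_3(k,\ell,m)=0$, with the pure belief structure. Then property B holds, $\overline{GR}^{\omega}=(\emptyset,\emptyset,\mathbb N)$, $\overline{GR}^{\omega+1}=(\emptyset,\emptyset,\emptyset)$, and $\overline{LR}^{\alpha}=\overline{GR}^{\alpha}$ for all ordinals $\alpha$; in particular the closure ordinal of both $\overline{GR}$ and $\overline{LR}$ is $\omega+1$.
   Context: Restrictions of $H$ are triples $(S_1,S_2,S_3)$ with $S_i\subseteq\mathbb N$, ordered componentwise. Pure belief structure: beliefs of player $i$ in $G=(S_1,S_2,S_3)$ are the joint strategies $s_{-i}\in S_{-i}=\prod_{j\ne i}S_j$, expected payoff is the payoff. $s_i\in BR_G(s_{-i})$ iff $p_i(s_i,s_{-i})\ge p_i(s_i',s_{-i})$ for all $s_i'\in S_i$. Property B: every $s_{-i}\in\prod_{j\ne i}\mathbb N$ has a best response in $H$. $GR(G)_i:=\{s_i\in\mathbb N\mid\exists s_{-i}\in S_{-i}: s_i\in BR_H(s_{-i})\}$; $LR(G)_i:=\{s_i\in\mathbb N\mid\exists s_{-i}\in S_{-i}: s_i\in BR_G(s_{-i})\}$; $\overline{T}(G):=T(G)\cap G$. Iterations: $T^0:=H$, $T^{\alpha+1}:=T(T^\alpha)$, $T^\beta:=\bigcap_{\alpha<\beta}T^\alpha$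 for limit $\beta$; closure ordinal = least $\alpha$ with $T^{\alpha+1}=T^\alpha$. *)

From Stdlib Require Import Arith PeanoNat.

Inductive Player := P1 | P2 | P3.

Definition player_eqb (i j : Player) : bool :=
  match i, j with P1, P1 | P2, P2 | P3, P3 => true | _, _ => false end.

Definition Profile := Player -> nat.

Definition upd (s : Profile) (i : Player) (x : nat) : Profile :=
  fun j => if player_eqb j i then x else s j.

Definition pay (i : Player) (s : Profile) : nat :=
  match i with
  | P1 => if Nat.eqb (s P1) (s P2 + 1) then s P2 + 1 else 0
  | P2 => if Nat.eqb (s P1) (s P2) then s P1 else 0
  | P3 => 0
  end.

Definition Restr := Player -> nat -> Prop.

Definition req (G G' : Restr) : Prop := forall i x, G i x <-> G' i x.

Definition Hfull : Restr := fun _ _ => True.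

(** Pure belief structure: beliefs of i are joint strategies s_{-i}
    (encoded as a profile whose i-th component is ignored).
    x ∈ BR_G(s_{-i}) iff x ∈ S_i and p_i(x,s_{-i}) >= p_i(y,s_{-i}) for all y ∈ S_i. *)
Definition BR (G : Restr) (i : Player) (s : Profile) (x : nat) : Prop :=
  G i x /\ forall y, G i y -> pay i (upd s i y) <= pay i (upd s i x).

Definition Opp (G : Restr) (i : Player) (s : Profile) : Prop :=
  forall j, j <> i -> G j (s j).

Definition PropertyB : Prop :=
  forall (i : Player) (s : Profile), exists x, BR Hfull i s x.

Definition GR (G : Restr) : Restr :=
  fun i x => exists s, Opp G i s /\ BR Hfull i s x.

Definition LR (G : Restr) : Restr :=
  fun i x => exists s, Opp G i s /\ BR G i s x.

Definition bar (T : Restr -> Restr) (G : Restr) : Restr :=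
  fun i x => T G i x /\ G i x.

(** ** Transfinite iteration along an arbitrary well-order (I, lt).
    Ordinals are represented by positions in a well-ordered index type. *)

Definition is_succ {I : Type} (lt : I -> I -> Prop) (j i : I) : Prop :=
  lt j i /\ forall k, lt k i -> lt k j \/ k = j.

Definition is_zero {I : Type} (lt : I -> I -> Prop) (i : I) : Prop :=
  ~ exists j, lt j i.

Definition is_limit {I : Type} (lt : I -> I -> Prop) (i : I) : Prop :=
  (exists j, lt j i) /\ ~ exists j, is_succ lt j i.

Definition is_omega {I : Type} (lt : I -> I -> Prop) (i : I) : Prop :=
  is_limit lt i /\ forall j, lt j i -> ~ is_limit lt j.

Definition iter_spec {I : Type} (lt : I -> I -> Prop)
    (T : Restr -> Restr) (s : I -> Restr) : Prop :=
  forall i,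
    (is_zero lt i -> req (s i) Hfull) /\
    (forall j, is_succ lt j i -> req (s i) (T (s j))) /\
    (is_limit lt i -> req (s i) (fun p x => forall j, lt j i -> s j p x)).

Definition R_eeN : Restr := fun p _ => match p with P3 => True | _ => False end.
Definition R_eee : Restr := fun _ _ => False.

(** Statement about an iteration s: values at ω and ω+1, and closure ordinal ω+1
    (least α with T^{α+1} = T^α is ω+1). *)
Definition iter_facts {I : Type} (lt : I -> I -> Prop) (s : I -> Restr) : Prop :=
  (forall w, is_omega lt w -> req (s w) R_eeN) /\
  (forall w w1, is_omega lt w -> is_succ lt w w1 -> req (s w1) R_eee) /\
  (* for every α < ω+1 (i.e. α ≤ ω), T^{α+1} ≠ T^α *)
  (forall a a1, is_succ lt a a1 -> ~ (exists w, is_omega lt w /\ lt w a) ->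
     ~ req (s a1) (s a)) /\
  (forall w w1 w2, is_omega lt w -> is_succ lt w w1 -> is_succ lt w1 w2 ->
     req (s w2) (s w1)).

(* Both operators remove one point per round, alternately from S_1 and S_2: after n
   rounds the restriction is [stage n] = ({k | n <= 2k}, {l | n <= 2l+1}, N).  The
   reason is that the only best reply of player 1 to l is l+1 and (for k > 0) the only
   best reply of player 2 to k is k.  These replies always lie in the restriction
   considered, so local and global rationalizability coincide there.  At the first limit
   the intersection of all stages is (∅, ∅, N); there player 3 faces no belief at all,
   so one further round empties the game, and the empty game is a fixed point. *)

From Stdlib Require Import Arith Lia Classical Setoid Morphisms.

#[export] Instance req_Equivalence : Equivalence req.
Proof.
  split.
  - intros G i x; reflexivity.
  - intros G G' H i x; symmetry; apply H.
  - intros G1 G2 G3 H12 H23 i x; rewrite (H12 i x); apply H23.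
Qed.

#[export] Instance GR_proper : Proper (req ==> req) GR.
Proof.
  intros G G' HG i x; unfold GR, Opp.
  split; intros [s [Hs Hbr]]; exists s; split; auto; intros j Hj; apply HG; auto.
Qed.

#[export] Instance LR_proper : Proper (req ==> req) LR.
Proof.
  intros G G' HG i x; unfold LR, Opp, BR.
  split; intros [s [Hs [Hx Hbr]]]; exists s; (split; [|split]).
  - intros j Hj; apply HG, Hs, Hj.
  - apply HG, Hx.
  - intros y Hy; apply Hbr, HG, Hy.
  - intros j Hj; apply HG, Hs, Hj.
  - apply HG, Hx.
  - intros y Hy; apply Hbr, HG, Hy.
Qed.

#[export] Instance bar_proper (T : Restr -> Restr) :
  Proper (req ==> req) T -> Proper (req ==> req) (bar T).
Proof. intros HT G G' HG i x; unfold bar; rewrite (HT G G' HG i x), (HG i x); reflexivity. Qed.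

Lemma bar_R_eee (T : Restr -> Restr) : req (bar T R_eee) R_eee.
Proof. intros i x; unfold bar, R_eee; tauto. Qed.

Lemma BR_Hfull_P1 s x : BR Hfull P1 s x <-> x = s P2 + 1.
Proof.
  unfold BR, Hfull, pay, upd; simpl; split.
  - intros [_ Hbest]. specialize (Hbest (s P2 + 1) I).
    rewrite Nat.eqb_refl in Hbest. destruct (Nat.eqb_spec x (s P2 + 1)); lia.
  - intros ->. split; [exact I|]. intros y _.
    rewrite Nat.eqb_refl. destruct (Nat.eqb _ _); lia.
Qed.

Lemma BR_Hfull_P2 s x : BR Hfull P2 s x <-> x = s P1 \/ s P1 = 0.
Proof.
  unfold BR, Hfull, pay, upd; simpl; split.
  - intros [_ Hbest]. specialize (Hbest (s P1) I).
    rewrite Nat.eqb_refl in Hbest. destruct (Nat.eqb_spec (s P1) x); lia.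
  - intros Hx. split; [exact I|]. intros y _.
    destruct (Nat.eqb_spec (s P1) y), (Nat.eqb_spec (s P1) x); lia.
Qed.

Lemma BR_Hfull_P3 s x : BR Hfull P3 s x.
Proof. split; [exact I|]. intros y _; reflexivity. Qed.

Lemma propertyB : PropertyB.
Proof.
  intros [| |] s.
  - exists (s P2 + 1); apply BR_Hfull_P1; reflexivity.
  - exists (s P1); apply BR_Hfull_P2; left; reflexivity.
  - exists 0; apply BR_Hfull_P3.
Qed.

Definition contains_best_responses (G : Restr) : Prop :=
  forall i s, Opp G i s -> exists x, G i x /\ BR Hfull i s x.

Lemma bar_LR_bar_GR G : contains_best_responses G -> req (bar LR G) (bar GR G).
Proof.
  intros HG i x; unfold bar, LR, GR; split.
  - intros [[s [Hs [Hx Hbr]]] _]. split; [|exact Hx].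
    exists s; split; [exact Hs|]. split; [exact I|].
    destruct (HG i s Hs) as [x0 [Hx0 [_ Hbr0]]].
    intros y _. apply (Nat.le_trans _ _ _ (Hbr0 y I) (Hbr x0 Hx0)).
  - intros [[s [Hs [_ Hbr]]] Hx]. split; [|exact Hx].
    exists s; split; [exact Hs|]. split; [exact Hx|].
    intros y _; exact (Hbr y I).
Qed.

Definition stage (n : nat) : Restr := fun i x =>
  match i with P1 => n <= 2 * x | P2 => n <= 2 * x + 1 | P3 => True end.

Lemma Hfull_stage0 : req Hfull (stage 0).
Proof. intros [| |] x; unfold Hfull, stage; split; auto; lia. Qed.

Lemma stage_succ_neq n : ~ req (stage (S n)) (stage n).
Proof.
  intros H. destruct (Nat.Even_or_Odd n) as [[m Hm]|[m Hm]].
  - specialize (H P1 m); simpl in H; lia.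
  - specialize (H P2 m); simpl in H; lia.
Qed.

Lemma bar_GR_stage n : req (bar GR (stage n)) (stage (S n)).
Proof.
  intros [| |] x; unfold bar, GR, Opp, stage; split.
  - intros [[s [Hs Hbr]] Hx]. apply BR_Hfull_P1 in Hbr.
    specialize (Hs P2 ltac:(discriminate)); simpl in Hs; lia.
  - intros Hx. split; [|lia]. exists (fun _ => x - 1). split.
    + intros [| |] Hj; simpl; [congruence | lia | exact I].
    + apply BR_Hfull_P1; lia.
  - intros [[s [Hs Hbr]] Hx]. apply BR_Hfull_P2 in Hbr.
    specialize (Hs P1 ltac:(discriminate)); simpl in Hs.
    destruct Hbr; lia.
  - intros Hx. split; [|lia]. exists (fun _ => x). split.
    + intros [| |] Hj; simpl; [lia | congruence | exact I].
    + apply BR_Hfull_P2; left; reflexivity.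
  - intros _; exact I.
  - intros _. split; [|exact I]. exists (fun _ => n). split.
    + intros [| |] Hj; simpl; [lia | lia | congruence].
    + apply BR_Hfull_P3.
Qed.

Lemma stage_contains_best_responses n : contains_best_responses (stage n).
Proof.
  intros [| |] s Hs; unfold Opp, stage in *.
  - exists (s P2 + 1). specialize (Hs P2 ltac:(discriminate)); simpl in Hs.
    split; [lia | apply BR_Hfull_P1; reflexivity].
  - exists (s P1). specialize (Hs P1 ltac:(discriminate)); simpl in Hs.
    split; [lia | apply BR_Hfull_P2; left; reflexivity].
  - exists 0. split; [exact I | apply BR_Hfull_P3].
Qed.

Lemma bar_LR_stage n : req (bar LR (stage n)) (stage (S n)).
Proof. rewrite bar_LR_bar_GR by apply stage_contains_best_responses. apply bar_GR_stage. Qed.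

Lemma Opp_R_eeN i s : ~ Opp R_eeN i s.
Proof.
  intros H. destruct i; [exact (H P2 ltac:(discriminate)) | exact (H P1 ltac:(discriminate))
                        | exact (H P1 ltac:(discriminate))].
Qed.

Lemma bar_GR_R_eeN : req (bar GR R_eeN) R_eee.
Proof.
  intros i x; split; [|intros []].
  intros [[s [Hs _]] _]; exact (Opp_R_eeN i s Hs).
Qed.

Lemma bar_LR_R_eeN : req (bar LR R_eeN) R_eee.
Proof.
  rewrite bar_LR_bar_GR; [apply bar_GR_R_eeN|].
  intros i s Hs; destruct (Opp_R_eeN i s Hs).
Qed.

Lemma inter_stages_R_eeN (J : Type) (P : J -> Prop) (s : J -> Restr) :
  (forall j, P j -> exists n, req (s j) (stage n)) ->
  (forall n, exists j, P j /\ req (s j) (stage n)) ->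
  req (fun i x => forall j, P j -> s j i x) R_eeN.
Proof.
  intros Hstage Hall i x; split.
  - intros Hx. destruct i; simpl; [| |exact I];
      destruct (Hall (2 * x + 2)) as [j [Hj Hs]];
      specialize (Hx j Hj); apply Hs in Hx; simpl in Hx; lia.
  - intros Hx j Hj. destruct i; try destruct Hx.
    destruct (Hstage j Hj) as [n Hn]. apply Hn; exact I.
Qed.

Section WellOrder.

Variables (Pos : Type) (lt : Pos -> Pos -> Prop).
Hypothesis lt_wf : well_founded lt.
Hypothesis lt_trans : forall a b c, lt a b -> lt b c -> lt a c.
Hypothesis lt_total : forall a b, lt a b \/ a = b \/ lt b a.

Inductive rank : Pos -> nat -> Prop :=
  | rank_zero i : is_zero lt i -> rank i 0
  | rank_succ j i n : is_succ lt j i -> rank j n -> rank i (S n).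

Definition above_omega (i : Pos) : Prop := exists w, is_omega lt w /\ lt w i.

Lemma rank_not_limit i n : rank i n -> ~ is_limit lt i.
Proof.
  intros [i' Hz | j i' m Hj _] [Hne Hns]; [exact (Hz Hne) | exact (Hns (ex_intro _ j Hj))].
Qed.

Lemma position_trichotomy i : (exists n, rank i n) \/ is_omega lt i \/ above_omega i.
Proof.
  induction i as [i IH] using (well_founded_ind lt_wf).
  destruct (classic (exists j, lt j i /\ ~ exists n, rank j n)) as [[j [Hji Hj]]|Hranked].
  - right; right. destruct (IH j Hji) as [Hr|[Hw|[w [Hw Hwj]]]]; [contradiction | |].
    + exists j; split; assumption.
    + exists w; split; [exact Hw | exact (lt_trans _ _ _ Hwj Hji)].
  - assert (Hbelow : forall j, lt j i -> exists n, rank j n).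
    { intros j Hj; apply NNPP; intros Hn; apply Hranked; exists j; split; assumption. }
    destruct (classic (exists j, is_succ lt j i)) as [[j Hj]|Hns].
    + left. destruct (Hbelow j (proj1 Hj)) as [n Hn]. exists (S n); exact (rank_succ _ _ _ Hj Hn).
    + destruct (classic (exists j, lt j i)) as [Hne|Hz].
      * right; left. split; [split; assumption|].
        intros j Hj. destruct (Hbelow j Hj) as [n Hn]. exact (rank_not_limit _ _ Hn).
      * left; exists 0; constructor; exact Hz.
Qed.

Lemma exists_minimal (P : Pos -> Prop) :
  (exists x, P x) -> exists x, P x /\ forall y, lt y x -> ~ P y.
Proof.
  intros [x0 Hx0]. apply NNPP; intros Hnone.
  assert (Hnot : forall x, ~ P x).
  { intros x; induction x as [x IH] using (well_founded_ind lt_wf).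
    intros Hx; apply Hnone; exists x; split; assumption. }
  exact (Hnot x0 Hx0).
Qed.

Lemma succ_below_limit i j : is_limit lt i -> lt j i -> exists k, is_succ lt j k /\ lt k i.
Proof.
  intros [_ Hns] Hji.
  assert (Hbetween : exists k, lt j k /\ lt k i).
  { apply NNPP; intros Hn; apply Hns; exists j; split; [exact Hji|].
    intros k Hk. destruct (lt_total k j) as [h|[h|h]]; auto.
    exfalso; apply Hn; exists k; split; assumption. }
  destruct (exists_minimal _ Hbetween) as [k [[Hjk Hki] Hmin]].
  exists k; repeat split; [assumption | | assumption].
  intros m Hm. destruct (lt_total m j) as [h|[h|h]]; auto.
  exfalso; apply (Hmin m Hm); split; [exact h | exact (lt_trans _ _ _ Hm Hki)].
Qed.

Lemma ranked_below_omega w j : is_omega lt w -> lt j w -> exists n, rank j n.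
Proof.
  intros Hw Hjw. destruct (position_trichotomy j) as [Hr|[Hj|[v [Hv Hvj]]]]; [exact Hr | |].
  - destruct (proj2 Hw j Hjw (proj1 Hj)).
  - destruct (proj2 Hw v (lt_trans _ _ _ Hvj Hjw) (proj1 Hv)).
Qed.

Lemma every_rank_below_omega w n : is_omega lt w -> exists j, lt j w /\ rank j n.
Proof.
  intros Hw. induction n as [|n [j [Hjw Hj]]].
  - destruct (exists_minimal (fun j => lt j w) (proj1 (proj1 Hw))) as [j [Hjw Hmin]].
    exists j; split; [exact Hjw|]. constructor.
    intros [k Hkj]. exact (Hmin k Hkj (lt_trans _ _ _ Hkj Hjw)).
  - destruct (succ_below_limit w j (proj1 Hw) Hjw) as [k [Hk Hkw]].
    exists k; split; [exact Hkw | exact (rank_succ _ _ _ Hk Hj)].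
Qed.

Definition staged_at (s : Pos -> Restr) (i : Pos) : Prop :=
  (forall n, rank i n -> req (s i) (stage n)) /\
  (is_omega lt i -> req (s i) R_eeN) /\
  (above_omega i -> req (s i) R_eee).

Definition staged (s : Pos -> Restr) : Prop := forall i, staged_at s i.

Lemma staged_unique s1 s2 : staged s1 -> staged s2 -> forall i, req (s1 i) (s2 i).
Proof.
  intros H1 H2 i. destruct (H1 i) as [A1 [B1 C1]], (H2 i) as [A2 [B2 C2]].
  destruct (position_trichotomy i) as [[n Hn]|[Hw|Ha]].
  - rewrite (A1 n Hn), (A2 n Hn); reflexivity.
  - rewrite (B1 Hw), (B2 Hw); reflexivity.
  - rewrite (C1 Ha), (C2 Ha); reflexivity.
Qed.

Lemma staged_iter_facts s : staged s -> iter_facts lt s.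
Proof.
  intros Hs. split; [|split; [|split]].
  - intros w Hw. exact (proj1 (proj2 (Hs w)) Hw).
  - intros w w1 Hw H1. apply (Hs w1). exists w; split; [exact Hw | exact (proj1 H1)].
  - intros a a1 Ha Hfin Heq.
    destruct (position_trichotomy a) as [[n Hn]|[Hw|Habove]].
    + apply (stage_succ_neq n).
      rewrite <- (proj1 (Hs a1) (S n) (rank_succ _ _ _ Ha Hn)), <- (proj1 (Hs a) n Hn).
      exact Heq.
    + rewrite (proj1 (proj2 (Hs a)) Hw), (proj2 (proj2 (Hs a1))) in Heq.
      * exact (proj2 (Heq P3 0) I).
      * exists a; split; [exact Hw | exact (proj1 Ha)].
    + exact (Hfin Habove).
  - intros w w1 w2 Hw H1 H2.
    rewrite (proj2 (proj2 (Hs w2))), (proj2 (proj2 (Hs w1))); [reflexivity | |].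
    + exists w; split; [exact Hw | exact (proj1 H1)].
    + exists w; split; [exact Hw | exact (lt_trans _ _ _ (proj1 H1) (proj1 H2))].
Qed.

Variable T : Restr -> Restr.
Hypothesis T_proper : Proper (req ==> req) T.
Hypothesis T_stage : forall n, req (T (stage n)) (stage (S n)).
Hypothesis T_R_eeN : req (T R_eeN) R_eee.
Hypothesis T_R_eee : req (T R_eee) R_eee.

Variable s : Pos -> Restr.
Hypothesis s_iter : iter_spec lt T s.

Lemma iter_rank i n : rank i n -> (forall j, lt j i -> staged_at s j) -> req (s i) (stage n).
Proof.
  intros [i' Hz | j i' m Hj Hm] IH.
  - rewrite (proj1 (s_iter i') Hz). apply Hfull_stage0.
  - rewrite (proj1 (proj2 (s_iter i')) j Hj), (proj1 (IH j (proj1 Hj)) m Hm). apply T_stage.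
Qed.

Lemma iter_omega i : is_omega lt i -> (forall j, lt j i -> staged_at s j) -> req (s i) R_eeN.
Proof.
  intros Hw IH. rewrite (proj2 (proj2 (s_iter i)) (proj1 Hw)).
  apply inter_stages_R_eeN.
  - intros j Hj. destruct (ranked_below_omega i j Hw Hj) as [n Hn].
    exists n; exact (proj1 (IH j Hj) n Hn).
  - intros n. destruct (every_rank_below_omega i n Hw) as [j [Hj Hn]].
    exists j; split; [exact Hj | exact (proj1 (IH j Hj) n Hn)].
Qed.

Lemma iter_above_omega i :
  above_omega i -> (forall j, lt j i -> staged_at s j) -> req (s i) R_eee.
Proof.
  intros [w [Hw Hwi]] IH. destruct (classic (exists j, is_succ lt j i)) as [[j Hj]|Hns].
  - rewrite (proj1 (proj2 (s_iter i)) j Hj).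
    destruct (proj2 Hj w Hwi) as [Hwj | ->].
    + rewrite (proj2 (proj2 (IH j (proj1 Hj)))); [exact T_R_eee|].
      exists w; split; assumption.
    + rewrite (proj1 (proj2 (IH j (proj1 Hj))) Hw). exact T_R_eeN.
  - assert (Hl : is_limit lt i) by (split; [exists w; exact Hwi | exact Hns]).
    rewrite (proj2 (proj2 (s_iter i)) Hl).
    destruct (succ_below_limit i w Hl Hwi) as [k [Hk Hki]].
    assert (Hk_empty : req (s k) R_eee).
    { apply (IH k Hki). exists w; split; [exact Hw | exact (proj1 Hk)]. }
    intros p x; split; [|intros []].
    intros Hx; apply (Hk_empty p x), Hx, Hki.
Qed.

Lemma iter_spec_staged : staged s.
Proof.
  intros i; induction i as [i IH] using (well_founded_ind lt_wf).
  split; [|split].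
  - intros n Hn; exact (iter_rank i n Hn IH).
  - intros Hw; exact (iter_omega i Hw IH).
  - intros Habove; exact (iter_above_omega i Habove IH).
Qed.

End WellOrder.

Theorem mainTheorem15 :
  PropertyB /\
  forall (I : Type) (lt : I -> I -> Prop),
    well_founded lt ->
    (forall a b c, lt a b -> lt b c -> lt a c) ->
    (forall a b, lt a b \/ a = b \/ lt b a) ->
    forall (sGR sLR : I -> Restr),
      iter_spec lt (bar GR) sGR ->
      iter_spec lt (bar LR) sLR ->
      (forall a, req (sLR a) (sGR a)) /\
      iter_facts lt sGR /\ iter_facts lt sLR.
Proof.
  split; [exact propertyB|].
  intros I lt wf tr tot sGR sLR HGR HLR.
  assert (GR_staged : staged I lt sGR).
  { apply (iter_spec_staged I lt wf tr tot (bar GR)); auto using bar_GR_stage,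
      bar_GR_R_eeN, bar_R_eee; typeclasses eauto. }
  assert (LR_staged : staged I lt sLR).
  { apply (iter_spec_staged I lt wf tr tot (bar LR)); auto using bar_LR_stage,
      bar_LR_R_eeN, bar_R_eee; typeclasses eauto. }
  split; [|split].
  - exact (staged_unique I lt wf tr sLR sGR LR_staged GR_staged).
  - exact (staged_iter_facts I lt wf tr sGR GR_staged).
  - exact (staged_iter_facts I lt wf tr sLR LR_staged).
Qed.
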